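(* Let $f:(\mathbb C^2,0)\to(\mathbb C,0)$ be an irreducible plane curve germ which is singular at $0$, let $p,q$ be coprime positive integers, and let $G(M)$ be the plumbing graph of $M=S^3_{-p/q}(K_f)$ described in the context. Then $G(M)$ is an almost rational (AR) graph.
   Context: $K_f=\{f=0\}\cap S^3_\epsilon\subset S^3$ is the (algebraic) knot of $f$; it is not the unknot. Let $G(f)$ be the minimal embedded good resolution graph of $f$ (a tree of rational curves decorated by self-intersection numbers); it has a unique vertex $v_0$ with decoration $-1$, and the strict transform of $\{f=0\}$ meets the exceptional curve $E_{v_0}$. Let $\bar G$ be this graph with the arrow (strict transform) removed, and let $m_f$ be the vanishing order of the pull-back of $f$ along $E_{v_0}$. Write $p/q=[k_1,\dots,k_s]=k_1-1/(k_2-1/(\cdots-1/k_s))$ with integers $k_1\ge 1$ and $k_j\ge2$ for $j\ge 2$. The graph $G(M)$ is obtained from $\bar G$ by attaching a chain of vertices $v_1,\dots,v_s$ (with $v_1$ joined to $v_0$ and $v_j$ joined to $v_{j+1}$), where $v_1$ has Euler number $-k_1-m_f$ and $v_j$ has Euler number $-k_j$ for $2\le j\le s$; it is a negative definite plumbing graph (all vertices genus $0$ spheres) whose plumbed 3-manifold is $M$. For a connected negative definite plumbing tree with lattice $L$ (basis the vertices, intersection form given by Euler numbers on the diagonal and $1$ for adjacent vertices) and canonical class $K$ (defined by $(K,b_v)=-e_v-2$ for every vertex $v$), the graph is called rational if $-(l,l+K)/2\ge 1$ for every nonzero $l\ge0$ in $L$ (Artin's criterion). A graph is called almost rational (AR)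 if it has a vertex $v$ such that replacing the Euler number $e_v$ by any smaller integer yields a rational graph. *)

From mathcomp Require Import all_boot all_order all_algebra.
Set Implicit Arguments. Unset Strict Implicit. Unset Printing Implicit Defensive.
Import Order.TTheory GRing.Theory Num.Theory.
Local Open Scope ring_scope.

(* Combinatorial model of the minimal embedded good resolution of an       *)
(* irreducible singular plane curve germ, built from its Newton pairs      *)
(* (p_i, q_i) by simulating the sequence of point blow-ups.                *)
(* Vertices are 0 .. n-1 (in order of creation); pg_e = self-intersections *)
(* (Euler numbers), pg_m = vanishing orders of the pull-back of f along    *)
(* the exceptional curves, pg_edges = intersecting pairs of exceptional    *)
(* curves.                                                                 *)
Record pgraph := PGraph {
  pg_n : nat; pg_e : seq int; pg_m : seq nat; pg_edges : seq (nat * nat) }.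

(* Blow up the point A ∩ B (A, B = the at most two exceptional curves      *)
(* through the centre); mc = multiplicity of the strict transform of f     *)
(* at the centre.                                                          *)
Definition blowup (G : pgraph) (A B : option nat) (mc : nat) : pgraph :=
  let E := pg_n G in
  let decr (X : option nat) (e : seq int) :=
    if X is Some x then set_nth 0 e x (nth 0 e x - 1) else e in
  let mult (X : option nat) := if X is Some x then nth 0%N (pg_m G) x else 0%N in
  let edges0 :=
    if (A, B) is (Some x, Some y) then
      filter (fun uv => ~~ ((uv == (x, y)) || (uv == (y, x)))) (pg_edges G)
    else pg_edges G in
  let newedges (X : option nat) := if X is Some x then [:: (x, E)] else [::] in
  PGraph E.+1 (rcons (decr B (decr A (pg_e G))) (-1))
         (rcons (pg_m G) (mult A + mult B + mc)%N)
         (edges0 ++ newedges A ++ newedges B).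

(* Local situation: strict transform  w^a = u^b (+ h.o.t.), A = {u = 0},   *)
(* B = {w = 0} (None = not an exceptional curve); P = product of the later *)
(* p_j, so that the strict transform of f has multiplicity min(a,b) * P.  *)
(* Returns the new graph and the vertex (node) met by the strict transform.*)
Fixpoint pair_steps (fuel : nat) (G : pgraph) (A B : option nat)
    (a b P : nat) : pgraph * nat :=
  if fuel is fuel'.+1 then
    let G' := blowup G A B (minn a b * P)%N in
    let E := pg_n G in
    if (a == 1%N) && (b == 1%N) then (G', E)
    else if (a < b)%N then pair_steps fuel' G' (Some E) B a (b - a) P
    else pair_steps fuel' G' A (Some E) (a - b) b P
  else (G, 0%N).

Fixpoint res_aux (G : pgraph) (A : option nat) (ps : seq (nat * nat))
    : pgraph * nat :=
  match ps with
  | [::] => (G, odflt 0%N A)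
  | pq :: ps' =>
      let r := pair_steps (pq.1 + pq.2) G A None pq.1 pq.2
                          (\prod_(x <- ps') x.1)%N in
      res_aux r.1 (Some r.2) ps'
  end.

(* (graph G(f) without the arrow, vertex v_0 carrying the arrow). *)
Definition min_good_res (ps : seq (nat * nat)) : pgraph * nat :=
  res_aux (PGraph 0 [::] [::] [::]) None ps.

Definition newton_pairs (ps : seq (nat * nat)) : bool :=
  [&& ps != [::],
      all (fun pq => (2 <= pq.1)%N && (0 < pq.2)%N && coprime pq.1 pq.2) ps
    & (2 <= (head (0, 0) ps).2)%N]%N.

(* Plumbing graphs (all vertices genus 0), lattice, Artin criterion, AR.   *)
Record plumbing := Plumbing {
  pl_n : nat; pl_e : seq int; pl_edges : seq (nat * nat) }.

(* Lattice elements l = sum_v l v * b_v, v < pl_n G. *)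
Definition iform (G : plumbing) (l1 l2 : nat -> int) : int :=
  \sum_(v < pl_n G) (pl_e G)`_v * l1 v * l2 v
  + \sum_(uv <- pl_edges G) (l1 uv.1 * l2 uv.2 + l1 uv.2 * l2 uv.1).

(* (l, K) where (K, b_v) = - e_v - 2. *)
Definition Kform (G : plumbing) (l : nat -> int) : int :=
  \sum_(v < pl_n G) l v * (- (pl_e G)`_v - 2).

Definition rational_graph (G : plumbing) : Prop :=
  forall l : nat -> int,
    (forall v, (v < pl_n G)%N -> 0 <= l v) ->
    (exists v, (v < pl_n G)%N /\ l v != 0) ->
    1 <= - ((iform G l l + Kform G l)%:~R / 2 : rat).

Definition set_euler (G : plumbing) (v : nat) (x : int) : plumbing :=
  Plumbing (pl_n G) (set_nth 0 (pl_e G) v x) (pl_edges G).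

Definition almost_rational (G : plumbing) : Prop :=
  exists v, (v < pl_n G)%N /\
    forall x : int, x < (pl_e G)`_v -> rational_graph (set_euler G v x).

(* Negative continued fraction [k_1, ..., k_s] = k_1 - 1/(k_2 - ...). *)
Fixpoint hjval (ks : seq nat) : rat :=
  match ks with
  | [::] => 0
  | [:: k] => k%:R
  | k :: ks' => k%:R - (hjval ks')^-1
  end.

(* G(M): G(f) minus the arrow, plus the chain v_1 .. v_s attached to v_0;  *)
(* v_j has index N + j - 1 where N = number of vertices of G(f).           *)
Definition surgery_graph (ps : seq (nat * nat)) (ks : seq nat) : plumbing :=
  let r := min_good_res ps in
  let Gr := r.1 in let v0 := r.2 in
  let N := pg_n Gr in
  let mf := nth 0%N (pg_m Gr) v0 in
  Plumbing (N + size ks)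
    (pg_e Gr ++ [seq (if j == 0%N then - (nth 0%N ks j)%:Z - mf%:Z
                      else - (nth 0%N ks j)%:Z) | j <- iota 0 (size ks)])
    (pg_edges Gr ++ (v0, N) :: [seq (N + j, N + j.+1)%N | j <- iota 0 (size ks).-1]).

(* Write Q(l) = (l,l) + (l,K) = sum_v (e_v l_v^2 - (e_v + 2) l_v) + 2 sum_{uv} l_u l_v;
   Artin's criterion holds as soon as Q(l) <= -2 for every nonzero l >= 0.
   This bound survives every blow-up: if E is the curve created at a point of
   A and B, then Q drops by t(t+1) >= 0 with t = l_E - l_A - l_B, and when l
   lives only on E it equals -l_E(l_E+1) <= -2.  Hence G(f) satisfies it.
   In G(M), with e_{v0} lowered and b = l_{v0}, c_j = l_{v_j}, the chain vertices
   have Euler numbers <= -2 (this is where m_f >= 1 is used), so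
   Q(l) <= Q_{G(f)}(l) - b(b-1) + C(b,c), where C(b,c) is the contribution of a
   (-2)-chain attached to a vertex of weight b.  Telescoping gives
   C(b,c) <= b(b-1), and C(0,c) <= -2 for c != 0, which settles both the case
   where l is nonzero on G(f) and the case where it is not.  The value p/q of
   the continued fraction plays no role. *)

From mathcomp Require Import all_boot all_order all_algebra.
From mathcomp Require Import zify ring lra.
Import Order.TTheory GRing.Theory Num.Theory.
Local Open Scope ring_scope.

Definition vterm (e t : int) : int := e * t * t + t * (- e - 2).

Definition esum (l : nat -> int) (E : seq (nat * nat)) : int :=
  \sum_(uv <- E) (l uv.1 * l uv.2 + l uv.2 * l uv.1).

Definition qform (n : nat) (e : seq int) (E : seq (nat * nat)) (l : nat -> int) : int :=
  \sum_(v < n) vterm e`_v (l v) + esum l E.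

Definition artin_rational (n : nat) (e : seq int) (E : seq (nat * nat)) : Prop :=
  forall l : nat -> int, (forall v, (v < n)%N -> 0 <= l v) ->
    (exists v, (v < n)%N /\ l v != 0) -> qform n e E l <= -2.

Definition edges_below (n : nat) (E : seq (nat * nat)) : bool :=
  all (fun uv => (uv.1 < n) && (uv.2 < n))%N E.

Lemma mul_succ_ge0 (t : int) : 0 <= t * (t + 1).
Proof. have [|] := lerP 0 t; nia. Qed.

Lemma vtermB (x y t : int) : vterm x t - vterm y t = (x - y) * (t * (t - 1)).
Proof. rewrite /vterm; ring. Qed.

Lemma rational_graph_artin (G : plumbing) :
  artin_rational (pl_n G) (pl_e G) (pl_edges G) -> rational_graph G.
Proof.
move=> HG l Hl Hnz.
have -> : iform G l l + Kform G l = qform (pl_n G) (pl_e G) (pl_edges G) l.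
  by rewrite /iform /Kform addrAC -big_split.
have := HG l Hl Hnz; rewrite -(ler_int rat) intrN => H; lra.
Qed.

Lemma qform_eq0 n e E l : edges_below n E -> (forall v, (v < n)%N -> l v = 0) ->
  qform n e E l = 0.
Proof.
move=> /allP HE Hl; rewrite /qform big1 ?add0r => [|v _]; last first.
  by rewrite Hl // /vterm; ring.
rewrite /esum big1_seq // => uv /andP [_ /HE /andP [H1 H2]].
by rewrite !Hl // mulr0 addr0.
Qed.

Lemma zero_or_support n (l : nat -> int) :
  (forall v, (v < n)%N -> l v = 0) \/ (exists v, (v < n)%N /\ l v != 0).
Proof.
have [/forallP H0|/forallPn [v Hv]] := boolP [forall v : 'I_n, l v == 0].
  by left => v Hv; apply/eqP/(H0 (Ordinal Hv)).
by right; exists v.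
Qed.

Lemma set_nth_cat (T : Type) (x0 : T) s1 s2 i y : (i < size s1)%N ->
  set_nth x0 (s1 ++ s2) i y = set_nth x0 s1 i y ++ s2.
Proof. by elim: s1 i => [|a s1 IH] [|i] //= Hi; rewrite IH. Qed.

Lemma sum_set_nth (n i : nat) (e : seq int) (y : int) (F : int -> nat -> int) :
  (i < n)%N -> \sum_(v < n) F (set_nth 0 e i y)`_v v
    = \sum_(v < n) F e`_v v + (F y i - F e`_i i).
Proof.
move=> Hi; rewrite (bigD1 (Ordinal Hi)) //= [in RHS](bigD1 (Ordinal Hi)) //=.
rewrite nth_set_nth /= eqxx (eq_bigr (fun v : 'I_n => F e`_v v)) => [|v Hv]; first ring.
by rewrite nth_set_nth /=; have /negbTE -> : (v : nat) != i := Hv.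
Qed.

Lemma qform_set_nth n e E l i y : (i < n)%N ->
  qform n (set_nth 0 e i y) E l = qform n e E l + (vterm y (l i) - vterm e`_i (l i)).
Proof.
by move=> Hi; rewrite /qform (sum_set_nth _ _ _ _ (fun x v => vterm x (l v))) //; ring.
Qed.

Lemma qform_cat n1 n2 e1 e2 E1 E2 l : size e1 = n1 ->
  qform (n1 + n2) (e1 ++ e2) (E1 ++ E2) l =
  qform n1 e1 E1 l + (\sum_(j < n2) vterm e2`_j (l (n1 + j)%N) + esum l E2).
Proof.
move=> He1; rewrite /qform /esum big_cat big_split_ord /=.
rewrite (eq_bigr (fun v : 'I_n1 => vterm e1`_v (l v))) => [|v _]; last first.
  by rewrite nth_cat He1 ltn_ord.
rewrite (eq_bigr (fun j : 'I_n2 => vterm e2`_j (l (n1 + j)%N))) => [|j _]; first ring.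
by rewrite nth_cat He1 ltnNge leq_addr /= addKn.
Qed.

Definition joins (x y : nat) (uv : nat * nat) : bool :=
  (uv == (x, y)) || (uv == (y, x)).

Lemma esum_filter_joins l x y E : 0 <= l x * l y -> has (joins x y) E ->
  esum l (filter (fun uv => ~~ joins x y uv) E) <= esum l E - 2 * (l x * l y).
Proof.
move=> Hxy /hasP [uv0 Huv0 Hj0].
have Fj uv : joins x y uv -> l uv.1 * l uv.2 + l uv.2 * l uv.1 = 2 * (l x * l y).
  by case/orP => /eqP -> /=; ring.
have : 2 * (l x * l y) <=
    \sum_(uv <- E | joins x y uv) (l uv.1 * l uv.2 + l uv.2 * l uv.1).
  rewrite (big_rem uv0) //= Hj0 Fj // lerDl.
  by apply: sumr_ge0 => uv /Fj ->; rewrite mulr_ge0.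
rewrite /esum big_filter [X in _ <= X - _](bigID (joins x y)) /=; lra.
Qed.

Definition lopt (l : nat -> int) (X : option nat) : int :=
  if X is Some x then l x else 0.
Definition opt_lt (n : nat) (X : option nat) : bool :=
  if X is Some x then (x < n)%N else true.

Definition decr_at (X : option nat) (e : seq int) : seq int :=
  if X is Some x then set_nth 0 e x (nth 0 e x - 1) else e.
Definition mult_at (G : pgraph) (X : option nat) : nat :=
  if X is Some x then nth 0%N (pg_m G) x else 0%N.
Definition edges_without (G : pgraph) (A B : option nat) : seq (nat * nat) :=
  if (A, B) is (Some x, Some y) then filter (fun uv => ~~ joins x y uv) (pg_edges G)
  else pg_edges G.
Definition edge_to (E : nat) (X : option nat) : seq (nat * nat) :=
  if X is Some x then [:: (x, E)] else [::].

Lemma blowupE G A B mc : blowup G A B mc =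
  PGraph (pg_n G).+1 (rcons (decr_at B (decr_at A (pg_e G))) (-1))
         (rcons (pg_m G) (mult_at G A + mult_at G B + mc)%N)
         (edges_without G A B ++ edge_to (pg_n G) A ++ edge_to (pg_n G) B).
Proof. by []. Qed.

Definition adjacent (G : pgraph) (A B : option nat) : bool :=
  if (A, B) is (Some x, Some y) then has (joins x y) (pg_edges G) else true.

Definition pg_qform (G : pgraph) : (nat -> int) -> int :=
  qform (pg_n G) (pg_e G) (pg_edges G).

Record rational_res (G : pgraph) : Prop := RationalRes {
  size_pg_e : size (pg_e G) = pg_n G;
  size_pg_m : size (pg_m G) = pg_n G;
  pg_edges_below : edges_below (pg_n G) (pg_edges G);
  pg_m_gt0 : forall v, (v < pg_n G)%N -> (0 < nth 0%N (pg_m G) v)%N;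
  pg_artin : artin_rational (pg_n G) (pg_e G) (pg_edges G) }.

Lemma opt_ltS n X : opt_lt n X -> opt_lt n.+1 X.
Proof. by case: X => //= x /ltnW. Qed.

Lemma lopt_eq0 n X (l : nat -> int) : opt_lt n X -> (forall v, (v < n)%N -> l v = 0) ->
  lopt l X = 0.
Proof. by case: X => [x|] //= Hx H; rewrite H. Qed.

Lemma lopt_ge0 n X (l : nat -> int) : opt_lt n X -> (forall v, (v < n)%N -> 0 <= l v) ->
  0 <= lopt l X.
Proof. by case: X => [x|] //= Hx H; rewrite H. Qed.

Lemma size_decr_at X e : opt_lt (size e) X -> size (decr_at X e) = size e.
Proof. by case: X => [x|] //= Hx; rewrite size_set_nth; apply/maxn_idPr. Qed.

Lemma qform_decr_at n X e E l : opt_lt n X ->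
  qform n (decr_at X e) E l = qform n e E l - lopt l X * (lopt l X - 1).
Proof.
case: X => [x|] /= Hx; last by rewrite mul0r subr0.
by rewrite qform_set_nth // vtermB; ring.
Qed.

Lemma esum_cat l E1 E2 : esum l (E1 ++ E2) = esum l E1 + esum l E2.
Proof. by rewrite /esum big_cat. Qed.

Lemma esum_edge_to l E X : esum l (edge_to E X) = 2 * lopt l X * l E.
Proof. by case: X => [x|] /=; rewrite /esum ?big_cons big_nil /=; ring. Qed.

Lemma esum_edges_without G A B l : adjacent G A B -> 0 <= lopt l A * lopt l B ->
  esum l (edges_without G A B) <= esum l (pg_edges G) - 2 * (lopt l A * lopt l B).
Proof.
case: A => [x|]; case: B => [y|] //= *; rewrite ?mulr0 ?mul0r ?subr0 //.
exact: esum_filter_joins.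
Qed.

Lemma pg_qform_blowup G A B mc l : size (pg_e G) = pg_n G ->
  opt_lt (pg_n G) A -> opt_lt (pg_n G) B -> adjacent G A B ->
  0 <= lopt l A -> 0 <= lopt l B ->
  pg_qform (blowup G A B mc) l <= pg_qform G l -
    (l (pg_n G) - lopt l A - lopt l B) * (l (pg_n G) - lopt l A - lopt l B + 1).
Proof.
move=> He HA HB HAB Ha Hb.
have := esum_edges_without _ _ _ l HAB (mulr_ge0 Ha Hb).
rewrite blowupE /pg_qform /= -cats1 -[(pg_n G).+1]addn1 qform_cat ?size_decr_at ?He //.
rewrite !qform_decr_at // /qform big_ord1 addn0 !esum_cat !esum_edge_to /vterm /=.
set a := lopt l A; set b := lopt l B; set c := l (pg_n G); nia.
Qed.

Lemma edges_below_blowup G A B mc : edges_below (pg_n G) (pg_edges G) ->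
  opt_lt (pg_n G) A -> opt_lt (pg_n G) B ->
  edges_below (pg_n (blowup G A B mc)) (pg_edges (blowup G A B mc)).
Proof.
move=> HE HA HB; rewrite blowupE /edges_below /= !all_cat; apply/and3P; split.
- have HE' : edges_below (pg_n G) (edges_without G A B).
    case: A {HA} => [x|]; case: B {HB} => [y|] //=.
    by apply/allP => uv; rewrite mem_filter => /andP [_]; apply: (allP HE).
  by apply: sub_all HE' => uv /andP [H1 H2]; rewrite !ltnS ltnW // ltnW.
- by case: A HA => [x|] //= Hx; rewrite !ltnS leqnn ltnW.
- by case: B HB => [x|] //= Hx; rewrite !ltnS leqnn ltnW.
Qed.

Lemma artin_blowup G A B mc : rational_res G ->
  opt_lt (pg_n G) A -> opt_lt (pg_n G) B -> adjacent G A B ->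
  artin_rational (pg_n (blowup G A B mc)) (pg_e (blowup G A B mc))
                 (pg_edges (blowup G A B mc)).
Proof.
move=> [He _ HE _ HG] HA HB HAB l; rewrite blowupE /= => Hl [w [Hw Hlw]].
have Hl' v : (v < pg_n G)%N -> 0 <= l v by move/ltnW; apply: Hl.
have Hc : 0 <= l (pg_n G) by apply: Hl.
have := pg_qform_blowup _ _ _ mc l He HA HB HAB
  (lopt_ge0 _ _ _ HA Hl') (lopt_ge0 _ _ _ HB Hl').
rewrite blowupE /pg_qform /=.
have [H0|Hnz] := zero_or_support (pg_n G) l; last first.
  have := HG l Hl' Hnz; have := mul_succ_ge0 (l (pg_n G) - lopt l A - lopt l B); lra.
rewrite (qform_eq0 _ _ _ _ HE H0) (lopt_eq0 _ _ _ HA H0) (lopt_eq0 _ _ _ HB H0) !subr0.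
move: Hw Hlw; rewrite ltnS leq_eqVlt => /orP [/eqP ->|/H0 ->]; last by rewrite eqxx.
move=> Hlc; have : 1 <= l (pg_n G) by lia.
nia.
Qed.

Lemma rational_res_blowup G A B mc : rational_res G ->
  opt_lt (pg_n G) A -> opt_lt (pg_n G) B -> adjacent G A B ->
  (A != None) || (B != None) || (0 < mc)%N -> rational_res (blowup G A B mc).
Proof.
move=> HG HA HB HAB Hmc; have [He Hm HE Hm0 _] := HG.
constructor.
- by rewrite blowupE /= size_rcons !size_decr_at ?size_decr_at ?He.
- by rewrite blowupE /= size_rcons Hm.
- exact: edges_below_blowup.
- move=> v; rewrite blowupE /= nth_rcons Hm ltnS leq_eqVlt => /orP [/eqP ->|Hv].
    rewrite ltnn eqxx; case: A {HAB} HA Hmc => [x|] /= Hx.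
      by rewrite -addnA addn_gt0 Hm0.
    by case: B HB => [y|] /= Hy; first by rewrite addn_gt0 Hm0 ?orbT.
  by rewrite Hv Hm0.
- exact: artin_blowup.
Qed.

Lemma adjacent_blowup_l G A B mc : adjacent (blowup G A B mc) (Some (pg_n G)) B.
Proof.
by case: B => [y|] //=; rewrite /adjacent blowupE /= !has_cat /= /joins eqxx !orbT.
Qed.

Lemma adjacent_blowup_r G A B mc : adjacent (blowup G A B mc) A (Some (pg_n G)).
Proof.
by case: A => [x|] //=; rewrite /adjacent blowupE /= !has_cat /= /joins eqxx !orbT.
Qed.

Lemma rational_res_pair_steps fuel G A B a b P : rational_res G ->
  opt_lt (pg_n G) A -> opt_lt (pg_n G) B -> adjacent G A B ->
  (A != None) || (B != None) || (0 < minn a b * P)%N ->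
  (0 < fuel)%N || (0 < pg_n G)%N ->
  rational_res (pair_steps fuel G A B a b P).1 /\
  ((pair_steps fuel G A B a b P).2 < pg_n (pair_steps fuel G A B a b P).1)%N.
Proof.
elim: fuel G A B a b => [|fuel IH] G A B a b HG HA HB HAB Hc Hf //=.
have HG' := rational_res_blowup _ _ _ _ HG HA HB HAB Hc.
have Hn : pg_n (blowup G A B (minn a b * P)) = (pg_n G).+1 by rewrite blowupE.
case: ifP => _; first by rewrite Hn ltnSn.
by case: ifP => _; apply: IH;
  rewrite ?Hn ?(opt_ltS _ _ HA) ?(opt_ltS _ _ HB) ?adjacent_blowup_l ?adjacent_blowup_r ?orbT //=.
Qed.

Lemma rational_res_res_aux ps G A : rational_res G -> opt_lt (pg_n G) A ->
  all (fun pq => (0 < pq.1) && (0 < pq.2))%N ps -> (A != None) || (ps != [::]) ->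
  rational_res (res_aux G A ps).1 /\ ((res_aux G A ps).2 < pg_n (res_aux G A ps).1)%N.
Proof.
elim: ps G A => [|[p q] ps IH] G A HG HA /=; first by case: A HA => [x|].
case/andP=> /andP [Hp Hq] Hps _.
set P := \prod_(pq <- ps) pq.1.
have HP : (0 < P)%N by rewrite /P big_seq prodn_cond_gt0 // => pq /(allP Hps) /andP [].
have Hadj : adjacent G A None by case: A {HA}.
have Hc : (A != None) || (@None nat != None) || (0 < minn p q * P)%N.
  by rewrite muln_gt0 leq_min Hp Hq HP /= orbT.
have Hf : (0 < p + q)%N || (0 < pg_n G)%N by rewrite addn_gt0 Hp.
have [HG' Hv] := rational_res_pair_steps (p + q) G A None p q P HG HA isT Hadj Hc Hf.
exact: IH.
Qed.

Lemma rational_res_min_good_res ps : newton_pairs ps ->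
  rational_res (min_good_res ps).1 /\ ((min_good_res ps).2 < pg_n (min_good_res ps).1)%N.
Proof.
case/and3P=> Hne Hps _; apply: rational_res_res_aux => //.
- by constructor => // l _ [v []].
- by apply: sub_all Hps => pq /andP [/andP [/ltnW -> ->]].
Qed.

Definition chain_form (s : nat) (b : int) (c : nat -> int) : int :=
  \sum_(j < s.+1) vterm (-2) (c j) + 2 * b * c 0%N + 2 * \sum_(j < s) c j * c j.+1.

Lemma chain_formS s b c : chain_form s.+1 b c =
  vterm (-2) (c 0%N) + 2 * b * c 0%N + chain_form s (c 0%N) (fun j => c j.+1).
Proof.
have bump0 (F : nat -> int) n : \sum_(i < n) F (bump 0 i) = \sum_(i < n) F i.+1 by [].
rewrite /chain_form (big_ord_recl s.+1) (big_ord_recl s (fun j => c j * c j.+1)) /=.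
rewrite (bump0 (fun i => vterm (-2) (c i))) (bump0 (fun i => c i * c i.+1)).
ring.
Qed.

Lemma vterm_m2 t : vterm (-2) t = - 2 * (t * t).
Proof. rewrite /vterm; ring. Qed.

Lemma chain_form_le s b c : chain_form s b c <= b * (b - 1).
Proof.
elim: s b c => [|s IH] b c.
  rewrite /chain_form big_ord1 big_ord0 vterm_m2 /=.
  have := mul_succ_ge0 (b - c 0%N - 1); have := mul_succ_ge0 (c 0%N - 1); nia.
rewrite chain_formS vterm_m2; have := IH (c 0%N) (fun j => c j.+1).
have := mul_succ_ge0 (b - c 0%N - 1); nia.
Qed.

Lemma chain_form0_le s c : (forall j, (j <= s)%N -> 0 <= c j) ->
  (exists j, (j <= s)%N /\ c j != 0) -> chain_form s 0 c <= -2.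
Proof.
elim: s c => [|s IH] c Hc [j [Hj Hcj]].
  move: Hj Hcj; rewrite leqn0 => /eqP -> Hc0.
  rewrite /chain_form big_ord1 big_ord0 vterm_m2 /=; nia.
rewrite chain_formS mulr0 mul0r addr0.
have [Hc0|Hc0] := eqVneq (c 0%N) 0.
  rewrite Hc0 vterm_m2 !mulr0 add0r; apply: IH => [i Hi|]; first exact: (Hc i.+1 Hi).
  by case: j Hj Hcj => [|j] Hj Hcj; [rewrite Hc0 eqxx in Hcj | exists j].
have := chain_form_le s (c 0%N) (fun j => c j.+1); have := Hc 0%N isT.
rewrite vterm_m2; nia.
Qed.

Definition chain_edges (N s : nat) : seq (nat * nat) :=
  [seq (N + j, N + j.+1)%N | j <- iota 0 s].

Lemma esum_chain l v0 N s : esum l ((v0, N) :: chain_edges N s) =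
  2 * l v0 * l N + 2 * \sum_(j < s) l (N + j)%N * l (N + j.+1)%N.
Proof.
rewrite /esum /chain_edges big_cons big_map.
rewrite (_ : iota 0 s = index_iota 0 s) ?big_mkord ?mulr_sumr /=; last first.
  by rewrite /index_iota subn0.
by congr (_ + _); [ring | apply: eq_bigr => j _; ring].
Qed.

Lemma qform_attach_chain_le n e E v0 x y ys l :
  size e = n -> (v0 < n)%N -> x < e`_v0 ->
  (forall j, (j < (size ys).+1)%N -> (y :: ys)`_j <= -2) ->
  qform (n + (size ys).+1) (set_nth 0 (e ++ y :: ys) v0 x)
    (E ++ (v0, n) :: chain_edges n (size ys)) l <=
  qform n e E l - l v0 * (l v0 - 1) + chain_form (size ys) (l v0) (fun j => l (n + j)%N).
Proof.
move=> He Hv0 Hx Hys.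
rewrite set_nth_cat ?He // qform_cat ?size_set_nth ?He ?(maxn_idPr Hv0) //.
rewrite qform_set_nth // esum_chain /chain_form addn0.
have Hx' : vterm x (l v0) - vterm e`_v0 (l v0) <= - (l v0 * (l v0 - 1)).
  rewrite vtermB; have := mul_succ_ge0 (l v0 - 1); nia.
have Hch : \sum_(j < (size ys).+1) vterm (y :: ys)`_j (l (n + j)%N) <=
           \sum_(j < (size ys).+1) vterm (-2) (l (n + j)%N).
  apply: ler_sum => j _; rewrite -subr_ge0 vtermB.
  by have := Hys j (ltn_ord j); have := mul_succ_ge0 (l (n + j)%N - 1); nia.
lra.
Qed.

Definition chain_euler (mf : nat) (ks : seq nat) : seq int :=
  [seq (if j == 0%N then - (nth 0%N ks j)%:Z - mf%:Z else - (nth 0%N ks j)%:Z)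
  | j <- iota 0 (size ks)].

Definition attach_chain (G : pgraph) (v0 : nat) (ks : seq nat) : plumbing :=
  Plumbing (pg_n G + size ks) (pg_e G ++ chain_euler (nth 0%N (pg_m G) v0) ks)
    (pg_edges G ++ (v0, pg_n G) :: chain_edges (pg_n G) (size ks).-1).

Lemma surgery_graphE ps ks :
  surgery_graph ps ks = attach_chain (min_good_res ps).1 (min_good_res ps).2 ks.
Proof. by []. Qed.

Lemma chain_euler_le mf k ks : (0 < mf)%N -> (1 <= k)%N -> all (fun k => 2 <= k)%N ks ->
  forall j, (j < (size ks).+1)%N -> (chain_euler mf (k :: ks))`_j <= -2.
Proof.
move=> Hmf Hk Hks [|j] Hj; rewrite (nth_map 0%N) ?size_iota // nth_iota //=.
  by rewrite -opprD lerN2 -PoszD lez_nat -add1n leq_add.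
by rewrite lerN2 lez_nat; apply: (allP Hks); apply: mem_nth.
Qed.

Lemma almost_rational_attach_chain G v0 k ks : rational_res G -> (v0 < pg_n G)%N ->
  (1 <= k)%N -> all (fun k => 2 <= k)%N ks -> almost_rational (attach_chain G v0 (k :: ks)).
Proof.
move=> [He _ HE Hm HG] Hv0 Hk Hks; exists v0; split => [|x]; first by rewrite ltn_addr.
rewrite /= nth_cat He Hv0 => Hx; apply: rational_graph_artin => l Hl Hnz /=.
set ys := chain_euler _ _; have Hys := chain_euler_le _ _ _ (Hm v0 Hv0) Hk Hks.
have Eys : ys = head 0 ys :: behead ys by [].
have Hsize : size (behead ys) = size ks by rewrite /= size_map size_iota.
have := qform_attach_chain_le _ _ (pg_edges G) _ _ (head 0 ys) (behead ys) l He Hv0 Hx.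
rewrite -Eys Hsize => /(_ Hys).
have [H0|Hsupp] := zero_or_support (pg_n G) l; last first.
  have := HG l (fun v Hv => Hl v (ltn_addr _ Hv)) Hsupp.
  have := chain_form_le (size ks) (l v0) (fun j => l (pg_n G + j)%N); lra.
rewrite (qform_eq0 _ _ _ _ HE H0) (H0 _ Hv0) mul0r subr0 add0r.
suff : chain_form (size ks) 0 (fun j => l (pg_n G + j)%N) <= -2 by lra.
apply: chain_form0_le => [j Hj|]; first by apply: Hl; rewrite ltn_add2l.
case: Hnz => v [Hv Hlv]; exists (v - pg_n G)%N.
have HGv : (pg_n G <= v)%N by rewrite leqNgt; apply: contra Hlv => /H0 ->.
by rewrite subnKC // leq_subLR -ltnS -addnS.
Qed.

Theorem lemma2p4p2 (ps : seq (nat * nat)) (p q : nat) (ks : seq nat) :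
  newton_pairs ps ->
  (0 < p)%N -> (0 < q)%N -> coprime p q ->
  ks != [::] -> (1 <= head 0%N ks)%N -> all (fun k => 2 <= k)%N (behead ks) ->
  hjval ks = (p%:R / q%:R : rat) ->
  almost_rational (surgery_graph ps ks).
Proof.
move=> Hps _ _ _ + Hk Hks _; case: ks Hk Hks => [|k ks] //= Hk Hks _.
have [HG Hv0] := rational_res_min_good_res _ Hps.
by rewrite surgery_graphE; apply: almost_rational_attach_chain.
Qed.
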